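(* For the amalgam $\Gamma=G_0*_HG_1$ defined below, $K_0=H(0)$, $K_1=H(1)$, and $\ker\Gamma=K_0\cap K_1=H(0)\cap H(1)=\{e\}$.
   Context: Definition of $\Gamma$: write $\oplus$ for addition mod $2$. Let $H$ be the group with generators $h(i_1,\dots,i_n)$, one for each $n\ge1$ and $(i_1,\dots,i_n)\in\{0,1\}^n$, subject to $h(i_1,\dots,i_n)^2=e$ and, for sequences $(i_1,\dots,i_k)$, $(j_1,\dots,j_n)$ with $n\ge k$: $h(i_1,\dots,i_k)h(j_1,\dots,j_n)h(i_1,\dots,i_k)=h(j_1,\dots,j_k,j_{k+1}\oplus1,j_{k+2},\dots,j_n)$ if $n>k$ and $i_\ell=j_\ell$ for $1\le\ell\le k$, and $=h(j_1,\dots,j_n)$ otherwise. Let $\Gamma$ be generated by the $h$'s and $g_0,g_1$ with the relations of $H$ plus $g_0^2=g_1^2=e$, $(g_0h(1))^3=e$, $(g_1h(0))^3=e$, and for all $n\ge2$, $i_3,\dots,i_n\in\{0,1\}$: $g_0h(1,0,i_3,\dots,i_n)g_0=h(0,i_3,\dots,i_n)$, $g_0h(1,1,i_3,\dots,i_n)g_0=h(1,1,i_3,\dots,i_n)$, $g_1h(0,0,i_3,\dots,i_n)g_1=h(0,0,i_3,\dots,i_n)$, $g_1h(0,1,i_3,\dots,i_n)g_1=h(1,i_3,\dots,i_n)$. With $H\le\Gamma$ the subgroup generated by the $h$'s, $G_0=\langle H\cup\{g_0\}\rangle$, $G_1=\langle H\cup\{g_1\}\rangle$, one has $\Gamma=G_0*_HG_1$.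 For $j\in\{0,1\}$, $H(j)$ is the subgroup of $H$ generated by all $h(j,i_2,\dots,i_n)$, $n\ge1$, $i_2,\dots,i_n\in\{0,1\}$. For an amalgam $G_0*_HG_1$: for $j=0,1$ and $k\ge1$ let $T_{j,k}=\{x_0x_1\cdots x_{k-1}: x_i\in G_{i+j\bmod 2}\setminus H\}$, $T_{j,0}=H$, $C_{j,k}=\bigcap_{g\in T_{j,k}}gHg^{-1}$, $K_j=\bigcap_{k\ge0}C_{j,k}$, and $\ker\Gamma=\bigcap_{g\in\Gamma}gHg^{-1}$. *)

From Stdlib Require Import List Arith Bool.
Import ListNotations.

Record Grp := {
  car :> Type;
  gmul : car -> car -> car;
  ginv : car -> car;
  gone : car;
  gmulA : forall a b c, gmul a (gmul b c) = gmul (gmul a b) c;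
  gmul1 : forall a, gmul gone a = a;
  gmulV : forall a, gmul (ginv a) a = gone
}.

Arguments gmul {g} _ _.
Arguments ginv {g} _.
Arguments gone {g}.

Inductive gen (G : Grp) (S : G -> Prop) : G -> Prop :=
| gen_one : gen G S gone
| gen_base : forall x, S x -> gen G S x
| gen_mul : forall x y, gen G S x -> gen G S y -> gen G S (gmul x y)
| gen_inv : forall x, gen G S x -> gen G S (ginv x).

(* flip_at k l : replace the (k+1)-th entry (1-indexed) of l by its negation,
   i.e. j_{k+1} |-> j_{k+1} (+) 1 *)
Fixpoint flip_at (k : nat) (l : list bool) : list bool :=
  match k, l with
  | O, b :: t => negb b :: t
  | S k', b :: t => b :: flip_at k' t
  | _, [] => []
  end.

(* Sequences (i_1..i_n) in {0,1}^n, n>=1, are nonempty lists of booleans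
   (false = 0, true = 1). *)
Definition rels (G : Grp) (h : list bool -> G) (g0 g1 : G) : Prop :=
  (forall s, s <> [] -> gmul (h s) (h s) = gone) /\
  (forall i j, i <> [] -> length i <= length j ->
     ((length i < length j /\ firstn (length i) j = i) ->
        gmul (gmul (h i) (h j)) (h i) = h (flip_at (length i) j)) /\
     (~ (length i < length j /\ firstn (length i) j = i) ->
        gmul (gmul (h i) (h j)) (h i) = h j)) /\
  gmul g0 g0 = gone /\ gmul g1 g1 = gone /\
  gmul (gmul (gmul g0 (h [true])) (gmul g0 (h [true]))) (gmul g0 (h [true])) = gone /\
  gmul (gmul (gmul g1 (h [false])) (gmul g1 (h [false]))) (gmul g1 (h [false])) = gone /\
  (forall t, gmul (gmul g0 (h (true :: false :: t))) g0 = h (false :: t)) /\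
  (forall t, gmul (gmul g0 (h (true :: true :: t))) g0 = h (true :: true :: t)) /\
  (forall t, gmul (gmul g1 (h (false :: false :: t))) g1 = h (false :: false :: t)) /\
  (forall t, gmul (gmul g1 (h (false :: true :: t))) g1 = h (true :: t)).

(* (Gamma, h, g0, g1) is the group presented by the generators and relations:
   the relations hold, the generators generate, and any assignment in any group
   satisfying the relations extends to a homomorphism. *)
Definition is_presented (Gm : Grp) (h : list bool -> Gm) (g0 g1 : Gm) : Prop :=
  rels Gm h g0 g1 /\
  (forall x : Gm, gen Gm (fun y => (exists s, s <> [] /\ y = h s) \/ y = g0 \/ y = g1) x) /\
  (forall (G : Grp) (h' : list bool -> G) (g0' g1' : G), rels G h' g0' g1' ->
     exists f : Gm -> G,
       (forall a b, f (gmul a b) = gmul (f a) (f b)) /\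
       (forall s, s <> [] -> f (h s) = h' s) /\ f g0 = g0' /\ f g1 = g1').

Section Amalgam.
Variables (Gm : Grp) (h : list bool -> Gm) (g0 g1 : Gm).

(* H = <h's>,  G_0 = <H u {g0}>,  G_1 = <H u {g1}>  (false = index 0) *)
Definition Hsub : Gm -> Prop := gen Gm (fun y => exists s, s <> [] /\ y = h s).
Definition Gsub (j : bool) : Gm -> Prop :=
  gen Gm (fun y => (exists s, s <> [] /\ y = h s) \/ y = (if j then g1 else g0)).

Definition Hj (j : bool) : Gm -> Prop := gen Gm (fun y => exists t, y = h (j :: t)).

Fixpoint Talt (b : bool) (k : nat) (y : Gm) : Prop :=
  match k with
  | O => y = gone
  | S k' => exists x z, Gsub b x /\ ~ Hsub x /\ Talt (negb b) k' z /\ y = gmul x z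
  end.

Definition T (j : bool) (k : nat) : Gm -> Prop :=
  match k with O => Hsub | _ => Talt j k end.

Definition in_conjH (g y : Gm) : Prop := exists x, Hsub x /\ y = gmul (gmul g x) (ginv g).

Definition C (j : bool) (k : nat) (y : Gm) : Prop := forall g, T j k g -> in_conjH g y.
Definition K (j : bool) (y : Gm) : Prop := forall k, C j k y.
Definition kerG (y : Gm) : Prop := forall g : Gm, in_conjH g y.

End Amalgam.

From Stdlib Require Import List Arith Bool Lia Classical FunctionalExtensionality ProofIrrelevance.
Import ListNotations.

(* The group Γ acts on infinite binary sequences: h(s) flips the digit right
   after the prefix s, and g_0, g_1 act near the root.  Inside Γ the relations
   show that H(j) is conjugated into H when entering an alternating word from
   G_j, so H(j) ⊆ K_j, and that every element of Γ is in H or in some T_{j,k} H,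
   so ker Γ = K_0 ∩ K_1.  Conversely the action separates elements: an element
   of H(v) fixing every sequence that starts with v is trivial (induction on
   the depth of its generators), which gives H(0) ∩ H(1) = 1; and if y = a b
   in K_j with a ∈ H(j), b ∈ H(1-j), then b moving a sequence would let a
   suitable alternating word t bring the moved digit to the front, while
   t^-1 b t ∈ H fixes first digits, so b = 1 and K_j = H(j). *)

Section GroupFacts.
Context {G : Grp}.
Local Notation "a * b" := (@gmul G a b).
Local Notation "1" := (@gone G).

Lemma mulgV (a : G) : a * ginv a = 1.
Proof.
  transitivity (ginv (ginv a) * ginv a * (a * ginv a)).
  - rewrite gmulV, gmul1. reflexivity.
  - rewrite <- gmulA, (gmulA _ (ginv a) a), gmulV, gmul1. apply gmulV.
Qed.

Lemma mulg1 (a : G) : a * 1 = a.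
Proof. rewrite <- (gmulV _ a), gmulA, mulgV, gmul1. reflexivity. Qed.

Lemma mulKg (a b : G) : ginv a * (a * b) = b.
Proof. rewrite gmulA, gmulV, gmul1. reflexivity. Qed.

Lemma mulKVg (a b : G) : a * (ginv a * b) = b.
Proof. rewrite gmulA, mulgV, gmul1. reflexivity. Qed.

Lemma mulgI (a b c : G) : a * b = a * c -> b = c.
Proof. intro E. rewrite <- (mulKg a b), E, mulKg. reflexivity. Qed.

Lemma invg_unique (a b : G) : a * b = 1 -> ginv a = b.
Proof. intro E. apply (mulgI a). rewrite mulgV, E. reflexivity. Qed.

Lemma invgK (a : G) : ginv (ginv a) = a.
Proof. apply invg_unique, gmulV. Qed.

Lemma invgM (a b : G) : ginv (a * b) = ginv b * ginv a.
Proof.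
  apply invg_unique. rewrite <- gmulA, (gmulA _ b), mulgV, gmul1, mulgV. reflexivity.
Qed.

Lemma invg1 : ginv (1 : G) = 1.
Proof. apply invg_unique, gmul1. Qed.

Lemma invg_involution (a : G) : a * a = 1 -> ginv a = a.
Proof. apply invg_unique. Qed.

Lemma conjgM (p q y : G) : ginv (p * q) * y * (p * q) = ginv q * (ginv p * y * p) * q.
Proof. rewrite invgM, <- !gmulA. reflexivity. Qed.

Lemma conjgK (g y : G) : ginv g * (g * y * ginv g) * g = y.
Proof. rewrite <- !gmulA, gmulV, mulg1, mulKg. reflexivity. Qed.

Lemma conjg_mul (g a b : G) : ginv g * (a * b) * g = (ginv g * a * g) * (ginv g * b * g).
Proof. rewrite <- !gmulA, mulKVg. reflexivity. Qed.

Lemma conjgKV (g y : G) : g * (ginv g * y * g) * ginv g = y.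
Proof. rewrite <- !gmulA, mulgV, mulg1, mulKVg. reflexivity. Qed.

Lemma commute_of_conj_involution (a b : G) : a * a = 1 -> a * b * a = b -> a * b = b * a.
Proof. intros Ha Eb. rewrite <- Eb at 2. rewrite <- !gmulA, Ha, mulg1. reflexivity. Qed.

Fixpoint prodg (l : list G) : G := match l with [] => 1 | a :: l' => a * prodg l' end.

Lemma prodg_app l1 l2 : prodg (l1 ++ l2) = prodg l1 * prodg l2.
Proof. induction l1 as [|a l1 IH]; simpl; [rewrite gmul1|rewrite IH, gmulA]; reflexivity. Qed.

Lemma commute_prodg (a : G) l : Forall (fun b => a * b = b * a) l -> a * prodg l = prodg l * a.
Proof.
  induction 1 as [|b l Hb _ IH]; simpl; [rewrite gmul1, mulg1; reflexivity|].
  rewrite gmulA, Hb, <- !gmulA, IH. reflexivity.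
Qed.

Lemma gen_involutions_prodg (S : G -> Prop) : (forall s, S s -> s * s = 1) ->
  forall x, gen G S x -> exists l, Forall S l /\ x = prodg l.
Proof.
  intros Hs x Hx. induction Hx as [|x Sx|x y _ [l1 [F1 E1]] _ [l2 [F2 E2]]|x _ [l [F E]]].
  - exists []. auto.
  - exists [x]. simpl. rewrite mulg1. auto.
  - exists (l1 ++ l2). rewrite prodg_app, E1, E2. split; [apply Forall_app|]; auto.
  - exists (rev l). split; [apply Forall_rev; auto|]. subst x.
    induction F as [|a l Sa F IH]; simpl; [apply invg1|].
    rewrite invgM, prodg_app, IH. simpl. rewrite mulg1, invg_involution; auto.
Qed.

Lemma gen_mono (S S' : G -> Prop) :
  (forall y, S y -> gen G S' y) -> forall x, gen G S x -> gen G S' x.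
Proof.
  intros H x Hx. induction Hx; [apply gen_one|auto|apply gen_mul; auto|apply gen_inv; auto].
Qed.

Lemma gen_conj (S S' : G -> Prop) (q : G) :
  (forall y, S y -> gen G S' (ginv q * y * q)) ->
  forall x, gen G S x -> gen G S' (ginv q * x * q).
Proof.
  intros H x Hx. induction Hx as [| |x y _ IHx _ IHy|x _ IH]; auto.
  - rewrite mulg1, gmulV. apply gen_one.
  - rewrite conjg_mul. apply gen_mul; auto.
  - replace (ginv q * ginv x * q) with (ginv (ginv q * x * q)).
    + apply gen_inv; auto.
    + rewrite !invgM, invgK, gmulA. reflexivity.
Qed.

Lemma gen_conj_in (S : G -> Prop) g y : gen G S g -> gen G S y -> gen G S (ginv g * y * g).
Proof. intros. repeat apply gen_mul; auto. apply gen_inv; auto. Qed.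

Lemma gen_mulIl (S : G -> Prop) c x : gen G S c -> gen G S (c * x) -> gen G S x.
Proof. intros. rewrite <- (mulKg c x). apply gen_mul; auto. apply gen_inv; auto. Qed.

Lemma conj_prodg (P S : G -> Prop) :
  (forall g y, S g -> P y -> P (ginv g * y * g)) ->
  forall l y, Forall S l -> P y -> P (ginv (prodg l) * y * prodg l).
Proof.
  intros H l. induction l as [|a l IH]; intros y F Py; simpl.
  - rewrite invg1, gmul1, mulg1. auto.
  - inversion F; subst. rewrite conjgM. auto.
Qed.

End GroupFacts.

Section Morphism.
Context {G1 G2 : Grp} (f : G1 -> G2).
Hypothesis fM : forall a b, f (gmul a b) = gmul (f a) (f b).

Lemma morph1 : f gone = gone.
Proof. apply (mulgI (f gone)). rewrite <- fM, gmul1, mulg1. reflexivity. Qed.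

Lemma morphV a : f (ginv a) = ginv (f a).
Proof.
  symmetry. apply invg_unique. rewrite <- fM, mulgV. apply morph1.
Qed.

End Morphism.

Definition stream := nat -> bool.
Definition scons (b : bool) (w : stream) : stream :=
  fun n => match n with 0 => b | S m => w m end.
Definition stl (w : stream) : stream := fun n => w (S n).

Lemma stl_scons c w : stl (scons c w) = w.
Proof. reflexivity. Qed.

Lemma scons_eta (x : stream) : scons (x 0) (stl x) = x.
Proof. apply functional_extensionality. intros [|n]; reflexivity. Qed.

Lemma stream_eta2 (x : stream) : x = scons (x 0) (scons (x 1) (stl (stl x))).
Proof. apply functional_extensionality. intros [|[|n]]; reflexivity. Qed.

Lemma stream_eta3 (x : stream) :
  x = scons (x 0) (scons (x 1) (scons (x 2) (stl (stl (stl x))))).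
Proof. apply functional_extensionality. intros [|[|[|n]]]; reflexivity. Qed.

(* The action of Γ on binary sequences used to separate its elements: h(s)
   flips the digit right after the prefix s and fixes the sequences not
   beginning with s; g_0 exchanges 0w and 10w and fixes 11w, and g_1 likewise
   with the digits swapped. *)
Fixpoint hact (s : list bool) (x : stream) : stream :=
  match s with
  | [] => scons (negb (x 0)) (stl x)
  | b :: s' => if Bool.eqb b (x 0) then scons (x 0) (hact s' (stl x)) else x
  end.

Definition gact (j : bool) (x : stream) : stream :=
  if Bool.eqb (x 0) j then scons (negb j) (scons j (stl x))
  else if Bool.eqb (x 1) j then scons j (stl (stl x)) else x.

Lemma hact_cons_eq b s x : b = x 0 -> hact (b :: s) x = scons (x 0) (hact s (stl x)).
Proof. intros ->. simpl. rewrite eqb_reflx. reflexivity. Qed.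

Lemma hact_cons_neq b s x : b <> x 0 -> hact (b :: s) x = x.
Proof. intro E. simpl. apply eqb_false_iff in E. rewrite E. reflexivity. Qed.

Lemma hact_invol s x : hact s (hact s x) = x.
Proof.
  revert x; induction s as [|b s IH]; intro x.
  - apply functional_extensionality; intros [|n]; simpl; auto. apply negb_involutive.
  - destruct (bool_dec b (x 0)) as [E|E].
    + rewrite (hact_cons_eq _ _ x), hact_cons_eq by auto. simpl.
      rewrite stl_scons.
      rewrite IH. apply scons_eta.
    + rewrite (hact_cons_neq _ _ x); rewrite ?hact_cons_neq; auto.
Qed.

Lemma hact_head s x : s <> [] -> hact s x 0 = x 0.
Proof.
  destruct s as [|b s]; [congruence|intros _].
  destruct (bool_dec b (x 0)); [rewrite hact_cons_eq|rewrite hact_cons_neq]; auto.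
Qed.

Lemma gact_invol j x : gact j (gact j x) = x.
Proof.
  rewrite (stream_eta2 x). unfold gact.
  destruct j, (x 0), (x 1); reflexivity.
Qed.

Record bij := Bij {
  fw : stream -> stream; bw : stream -> stream;
  fw_bw : forall x, fw (bw x) = x; bw_fw : forall x, bw (fw x) = x }.

Lemma bij_eq (a b : bij) : (forall x, fw a x = fw b x) -> a = b.
Proof.
  intro H. assert (Hf : fw a = fw b) by (apply functional_extensionality; auto).
  assert (Hb : bw a = bw b).
  { apply functional_extensionality. intro x.
    rewrite <- (fw_bw b x) at 1. rewrite <- Hf. apply bw_fw. }
  destruct a, b; simpl in *. subst. f_equal; apply proof_irrelevance.
Qed.

Definition bij_comp (a b : bij) : bij.
Proof.
  refine (Bij (fun x => fw a (fw b x)) (fun x => bw b (bw a x)) _ _);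
    intro x; rewrite ?fw_bw, ?bw_fw; reflexivity.
Defined.

Definition bij_inv (a : bij) : bij := Bij (bw a) (fw a) (bw_fw a) (fw_bw a).
Definition bij_id : bij := Bij (fun x => x) (fun x => x) (fun _ => eq_refl) (fun _ => eq_refl).

Definition Sym : Grp.
Proof.
  refine (Build_Grp bij bij_comp bij_inv bij_id _ _ _);
    intros; apply bij_eq; simpl; [reflexivity|reflexivity|apply bw_fw].
Defined.

Definition involution_bij (f : stream -> stream) (H : forall x, f (f x) = x) : Sym :=
  Bij f f H H.
Definition hbij (s : list bool) : Sym := involution_bij (hact s) (hact_invol s).
Definition gbij (j : bool) : Sym := involution_bij (gact j) (gact_invol j).

(* [hconj i j] is the index of h(i) h(j) h(i) (for |i| <= |j|), computed
   digit by digit. *)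
Fixpoint hconj (i j : list bool) : list bool :=
  match i, j with
  | [a], b :: j' => if Bool.eqb a b then b :: flip_at 0 j' else j
  | a :: i', b :: j' => if Bool.eqb a b then b :: hconj i' j' else j
  | _, _ => j
  end.

Lemma hconj_spec i : forall j, i <> [] -> length i <= length j ->
  ((length i < length j /\ firstn (length i) j = i) -> hconj i j = flip_at (length i) j) /\
  (~ (length i < length j /\ firstn (length i) j = i) -> hconj i j = j).
Proof.
  induction i as [|a i IH]; intros j Hi Hl; [congruence|].
  destruct j as [|b j]; [simpl in Hl; lia|].
  assert (Hhd : a <> b -> ~ (length (a :: i) < length (b :: j) /\
                             firstn (length (a :: i)) (b :: j) = a :: i))
    by (intros E [_ F]; simpl in F; congruence).
  destruct (bool_dec a b) as [<-|E].
  2:{ assert (Hc : hconj (a :: i) (b :: j) = b :: j)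
        by (apply eqb_false_iff in E; destruct i; simpl; rewrite E; reflexivity).
      rewrite Hc. split; intro H; [exfalso; exact (Hhd E H)|reflexivity]. }
  destruct i as [|a' i].
  - simpl. rewrite eqb_reflx.
    destruct j as [|c j]; simpl; split; intro H; try reflexivity.
    exfalso; apply H; split; [lia|reflexivity].
  - change (hconj (a :: a' :: i) (a :: j)) with
      (if Bool.eqb a a then a :: hconj (a' :: i) j else a :: j).
    rewrite eqb_reflx.
    assert (Hl' : length (a' :: i) <= length j) by (simpl in Hl |- *; lia).
    destruct (IH j ltac:(congruence) Hl') as [IH1 IH2].
    change (length (a :: a' :: i)) with (S (length (a' :: i))).
    change (firstn (S (length (a' :: i))) (a :: j)) with (a :: firstn (length (a' :: i)) j).
    simpl flip_at. split; intro H.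
    + rewrite IH1; [reflexivity|]. destruct H as [H1 H2].
      split; [simpl in H1 |- *; lia|congruence].
    + rewrite IH2; [reflexivity|]. intros [H1 H2]. apply H.
      split; [simpl in H1 |- *; lia|congruence].
Qed.

Lemma hact_nil_conj c s w : hact [] (hact (c :: s) (hact [] w)) = hact (negb c :: s) w.
Proof.
  rewrite <- (scons_eta w). generalize (w 0) (stl w). intros a v.
  destruct a, c; reflexivity.
Qed.

Lemma hact_scons_eq c s w : hact (c :: s) (scons c w) = scons c (hact s w).
Proof. simpl. rewrite eqb_reflx. reflexivity. Qed.

Lemma hact_scons_neq b s c w : b <> c -> hact (b :: s) (scons c w) = scons c w.
Proof. intro E. simpl. apply eqb_false_iff in E. rewrite E. reflexivity. Qed.

Lemma hconj_cons_neq a b i j : a <> b -> hconj (a :: i) (b :: j) = b :: j.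
Proof. intro E. apply eqb_false_iff in E. destruct i; simpl; rewrite E; reflexivity. Qed.

Lemma hconj_head a b i j : exists t, hconj (a :: i) (b :: j) = b :: t.
Proof. destruct i; simpl; destruct (Bool.eqb a b); eauto. Qed.

Lemma hact_conj i : forall j x, i <> [] -> length i <= length j ->
  hact i (hact j (hact i x)) = hact (hconj i j) x.
Proof.
  induction i as [|a i IH]; intros j x Hi Hl; [congruence|].
  destruct j as [|b j]; [simpl in Hl; lia|].
  rewrite <- (scons_eta x). generalize (x 0) (stl x). clear x. intros c w.
  destruct (bool_dec a c) as [->|Eac]; [destruct (bool_dec b c) as [->|Ebc]|].
  - rewrite !hact_scons_eq. destruct i as [|a i].
    + destruct j as [|d j]; simpl hconj; rewrite eqb_reflx, hact_scons_eq.
      * rewrite hact_invol. reflexivity.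
      * rewrite hact_nil_conj. reflexivity.
    + change (hconj (c :: a :: i) (c :: j)) with
        (if Bool.eqb c c then c :: hconj (a :: i) j else c :: j).
      rewrite eqb_reflx, hact_scons_eq, IH; [reflexivity|congruence|].
      simpl in Hl |- *; lia.
  - rewrite hconj_cons_neq, hact_scons_eq, hact_scons_neq, hact_scons_eq, hact_invol,
      hact_scons_neq by congruence.
    reflexivity.
  - rewrite hact_scons_neq by auto. destruct (bool_dec a b) as [<-|Eab].
    + destruct (hconj_head a a i j) as [t ->]. rewrite !hact_scons_neq; auto.
    + rewrite hconj_cons_neq by auto. destruct (bool_dec b c) as [->|Ebc].
      * rewrite hact_scons_eq, hact_scons_neq; auto.
      * rewrite !hact_scons_neq; auto.
Qed.




Lemma hconj_app v b u : v <> [] -> hconj v (v ++ b :: u) = v ++ negb b :: u.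
Proof.
  induction v as [|a v IH]; intro Hv; [congruence|].
  destruct v as [|a' v]; [simpl; rewrite eqb_reflx; reflexivity|].
  change (hconj (a :: a' :: v) ((a :: a' :: v) ++ b :: u)) with
    (if Bool.eqb a a then a :: hconj (a' :: v) ((a' :: v) ++ b :: u)
     else a :: (a' :: v) ++ b :: u).
  rewrite eqb_reflx, IH by congruence. reflexivity.
Qed.

Lemma hconj_diverge v b c u u' : b <> c -> hconj (v ++ b :: u) (v ++ c :: u') = v ++ c :: u'.
Proof.
  intro Hbc. induction v as [|a v IH]; [apply hconj_cons_neq; auto|].
  simpl app. destruct (v ++ b :: u) as [|b0 l] eqn:E; [destruct v; discriminate|].
  change (hconj (a :: b0 :: l) (a :: v ++ c :: u')) with
    (if Bool.eqb a a then a :: hconj (b0 :: l) (v ++ c :: u') else a :: v ++ c :: u').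
  rewrite eqb_reflx, IH. reflexivity.
Qed.

Lemma Sym_rels : rels Sym hbij (gbij false) (gbij true).
Proof.
  split; [|split].
  - intros s _. apply bij_eq. intro x. apply hact_invol.
  - intros i j Hi Hl. destruct (hconj_spec i j Hi Hl) as [C1 C2].
    split; intro H; apply bij_eq; intro x; simpl; rewrite hact_conj by auto;
      [rewrite C1|rewrite C2]; auto.
  - repeat split; try intro t; apply bij_eq; intro x; simpl; rewrite (stream_eta3 x);
      generalize (x 0) (x 1) (x 2) (stl (stl (stl x))); intros [] [] [] w; reflexivity.
Qed.

Section Relations.
Variables (Gm : Grp) (h : list bool -> Gm) (g0 g1 : Gm).
Hypothesis HR : rels Gm h g0 g1.
Local Notation "a * b" := (@gmul Gm a b).
Local Notation "1" := (@gone Gm).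
Local Notation Hsub := (Hsub Gm h).
Local Notation Gsub := (Gsub Gm h g0 g1).
Local Notation Talt := (Talt Gm h g0 g1).

Definition gsel (j : bool) : Gm := if j then g1 else g0.

(* The subgroup H(v) generated by the h(v u); the paper's H(j) is [Hpref [j]]. *)
Definition Hpref (v : list bool) : Gm -> Prop := gen Gm (fun y => exists u, y = h (v ++ u)).

Lemma h_sq s : s <> [] -> h s * h s = 1.
Proof. apply HR. Qed.

Lemma h_inv s : s <> [] -> ginv (h s) = h s.
Proof. intro; apply invg_involution, h_sq; auto. Qed.

Lemma h_conj s w : s <> [] -> length s <= length w -> h s * h w * h s = h (hconj s w).
Proof.
  intros Hs Hl. destruct HR as [_ [HC _]]. destruct (HC s w Hs Hl) as [H1 H2].
  destruct (hconj_spec s w Hs Hl) as [C1 C2].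
  destruct (classic (length s < length w /\ firstn (length s) w = s)) as [P|P].
  - rewrite C1, H1; auto.
  - rewrite C2, H2; auto.
Qed.

Lemma g_sq j : gsel j * gsel j = 1.
Proof. destruct HR as [_ [_ [A [B _]]]]. destruct j; auto. Qed.

Lemma g_inv j : ginv (gsel j) = gsel j.
Proof. apply invg_involution, g_sq. Qed.

Lemma g_conj_swap j t : gsel j * h (negb j :: j :: t) * gsel j = h (j :: t).
Proof. destruct HR as [_ [_ [_ [_ [_ [_ [A [_ [_ B]]]]]]]]]. destruct j; simpl; auto. Qed.

Lemma g_conj_fix j t : gsel j * h (negb j :: negb j :: t) * gsel j = h (negb j :: negb j :: t).
Proof. destruct HR as [_ [_ [_ [_ [_ [_ [_ [A [B _]]]]]]]]]. destruct j; simpl; auto. Qed.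

Lemma g_conj_swap_inv j t : gsel j * h (j :: t) * gsel j = h (negb j :: j :: t).
Proof.
  rewrite <- (g_conj_swap j t), <- !gmulA, g_sq, mulg1, !gmulA, g_sq, gmul1. reflexivity.
Qed.

Lemma g_braid j : gsel j * h [negb j] * gsel j = h [negb j] * gsel j * h [negb j].
Proof.
  destruct HR as [_ [_ [_ [_ [A [B _]]]]]].
  assert (E : (gsel j * h [negb j]) * (gsel j * h [negb j]) * (gsel j * h [negb j]) = 1)
    by (destruct j; auto).
  assert (Hb : h [negb j] * h [negb j] = 1) by (apply h_sq; discriminate).
  assert (E2 : (gsel j * h [negb j] * gsel j) * (h [negb j] * gsel j * h [negb j]) = 1)
    by (rewrite <- E, <- !gmulA; reflexivity).
  rewrite <- (invg_unique _ _ E2), !invgM, !invg_involution by (auto using g_sq).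
  symmetry; apply gmulA.
Qed.

Lemma h_commute_diverge v b c u u' : b <> c ->
  h (v ++ b :: u) * h (v ++ c :: u') = h (v ++ c :: u') * h (v ++ b :: u).
Proof.
  intro Hbc.
  assert (N1 : v ++ b :: u <> []) by (destruct v; discriminate).
  assert (N2 : v ++ c :: u' <> []) by (destruct v; discriminate).
  destruct (le_le_S_dec (length (v ++ b :: u)) (length (v ++ c :: u'))) as [L|L].
  - apply commute_of_conj_involution; [apply h_sq; auto|].
    rewrite h_conj, hconj_diverge; auto.
  - symmetry. apply commute_of_conj_involution; [apply h_sq; auto|].
    rewrite h_conj, hconj_diverge by (auto; lia). reflexivity.
Qed.

Lemma h_conj_prefix v b u : v <> [] -> h v * h (v ++ b :: u) * h v = h (v ++ negb b :: u).
Proof. intro Hv. rewrite h_conj, hconj_app; auto. rewrite length_app; simpl; lia. Qed.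

Lemma Hpref_base v u : Hpref v (h (v ++ u)).
Proof. apply gen_base. eauto. Qed.

Lemma Hpref_app v t y : Hpref (v ++ t) y -> Hpref v y.
Proof.
  apply gen_mono. intros z [u ->]. rewrite <- app_assoc. apply Hpref_base.
Qed.

Lemma Hpref_sub_H v y : v <> [] -> Hpref v y -> Hsub y.
Proof.
  intro Hv. apply gen_mono. intros z [u ->]. apply gen_base. exists (v ++ u).
  split; auto. destruct v; [congruence|discriminate].
Qed.

Lemma Hpref1_conj_h j s y : s <> [] -> Hpref [j] y -> Hpref [j] (ginv (h s) * y * h s).
Proof.
  intros Hs. apply gen_conj. intros z [u ->]. rewrite h_inv by auto.
  destruct s as [|a s]; [congruence|]. simpl app.
  destruct (le_le_S_dec (length (a :: s)) (length (j :: u))) as [L|L].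
  - rewrite h_conj by auto. destruct (hconj_head a j s u) as [t ->]. apply (Hpref_base [j]).
  - assert (E : h (a :: s) * h (j :: u) * h (a :: s)
                = h (j :: u) * (h (j :: u) * h (a :: s) * h (j :: u)) * h (a :: s)).
    { rewrite <- !gmulA, (gmulA _ (h (j :: u)) (h (j :: u))), h_sq, gmul1 by discriminate.
      reflexivity. }
    rewrite E, h_conj by (simpl in *; try discriminate; lia).
    destruct (bool_dec j a) as [<-|Eja].
    + destruct (hconj_head j j u s) as [t ->].
      repeat apply gen_mul; apply (Hpref_base [j]).
    + rewrite hconj_cons_neq, <- gmulA, h_sq, mulg1 by (auto; discriminate).
      apply (Hpref_base [j]).
Qed.

Lemma Hpref1_normal j l y : Hsub l -> Hpref [j] y -> Hpref [j] (ginv l * y * l).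
Proof.
  intros Hl Hy. apply gen_involutions_prodg in Hl as [ls [F ->]].
  - apply (conj_prodg (Hpref [j]) (fun y => exists s, s <> [] /\ y = h s)); auto.
    intros g z [s [Hs ->]] Hz. apply Hpref1_conj_h; auto.
  - intros z [s [Hs ->]]. apply h_sq; auto.
Qed.

(* Every element of G_j is l w with l in L_j and w one of the six elements of
   the group generated by g_j and h(not j) (the braid relation makes it S_3):
   L_j is normalised by both generators. *)
Definition Lsub (j : bool) : Gm -> Prop :=
  gen Gm (fun y => exists s, s <> [] /\ s <> [negb j] /\ y = h s).

Lemma Lsub_base j s : s <> [] -> s <> [negb j] -> Lsub j (h s).
Proof. intros. apply gen_base. eauto. Qed.

Lemma Lsub_sub_H j y : Lsub j y -> Hsub y.
Proof. apply gen_mono. intros z [s [Hs [_ ->]]]. apply gen_base. eauto. Qed.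

Lemma cons_neq_negb (j : bool) t : j :: t <> [negb j].
Proof. intro E. injection E as E. destruct j; discriminate. Qed.

Lemma Lsub_conj_g j y : Lsub j y -> Lsub j (ginv (gsel j) * y * gsel j).
Proof.
  apply gen_conj. intros z [s [Hs [Hs' ->]]]. rewrite g_inv.
  destruct s as [|a s]; [congruence|].
  destruct (bool_dec a j) as [->|Ea].
  - rewrite g_conj_swap_inv. apply Lsub_base; discriminate.
  - replace a with (negb j) in * by (destruct a, j; simpl in *; congruence).
    destruct s as [|c t]; [congruence|].
    destruct (bool_dec c j) as [->|Ec].
    + rewrite g_conj_swap. apply Lsub_base; [discriminate|apply cons_neq_negb].
    + replace c with (negb j) by (destruct c, j; simpl in *; congruence).
      rewrite g_conj_fix. apply Lsub_base; discriminate.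
Qed.

Lemma Lsub_conj_h j y : Lsub j y -> Lsub j (ginv (h [negb j]) * y * h [negb j]).
Proof.
  apply gen_conj. intros z [s [Hs [Hs' ->]]]. rewrite h_inv by discriminate.
  destruct s as [|b s]; [congruence|].
  rewrite h_conj by (simpl; try discriminate; lia). simpl hconj.
  destruct (Bool.eqb (negb j) b) eqn:E.
  - apply Bool.eqb_prop in E as <-. destruct s as [|c s]; [congruence|].
    apply Lsub_base; discriminate.
  - apply Lsub_base; auto.
Qed.

Inductive word6 := We | Wa | Wb | Wab | Wba | Waba.

Definition word6_val (j : bool) (w : word6) : Gm :=
  let a := gsel j in let b := h [negb j] in
  match w with We => 1 | Wa => a | Wb => b | Wab => a * b | Wba => b * a | Waba => a * b * a end.

Definition word6_mul_a (w : word6) : word6 :=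
  match w with We => Wa | Wa => We | Wb => Wab | Wab => Wb | Wba => Waba | Waba => Wba end.

Definition word6_mul_b (w : word6) : word6 :=
  match w with We => Wb | Wa => Wba | Wb => We | Wab => Waba | Wba => Wa | Waba => Wab end.

Lemma g_mul_word6 j w : gsel j * word6_val j w = word6_val j (word6_mul_a w).
Proof.
  assert (Ha := g_sq j).
  destruct w; simpl; rewrite ?gmulA, ?Ha, ?gmul1, ?mulg1; reflexivity.
Qed.

Lemma h_mul_word6 j w : h [negb j] * word6_val j w = word6_val j (word6_mul_b w).
Proof.
  assert (Ha := g_sq j). assert (Hb : h [negb j] * h [negb j] = 1) by (apply h_sq; discriminate).
  destruct w; simpl; rewrite ?gmulA, ?Hb, ?gmul1, ?mulg1; try reflexivity.
  - symmetry. apply g_braid.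
  - rewrite <- g_braid, <- gmulA, Ha, mulg1. reflexivity.
Qed.

Lemma Gsub_decomp j x : Gsub j x -> exists l w, Lsub j l /\ x = l * word6_val j w.
Proof.
  intro Hx. apply gen_involutions_prodg in Hx as [ls [F ->]].
  2:{ intros z [[s [Hs ->]] | ->]; [apply h_sq; auto|apply (g_sq j)]. }
  induction F as [|g ls Hg F IH].
  { exists 1, We. split; [apply gen_one|]. simpl. rewrite mulg1. reflexivity. }
  destruct IH as [l [w [Hl E]]]. simpl. rewrite E.
  destruct Hg as [[s [Hs ->]]|Hg].
  - destruct (list_eq_dec bool_dec s [negb j]) as [->|Es].
    + exists (ginv (h [negb j]) * l * h [negb j]), (word6_mul_b w).
      split; [apply Lsub_conj_h; auto|].
      rewrite <- h_mul_word6, h_inv, <- !gmulA, (gmulA _ (h [negb j]) (h [negb j])), h_sq, gmul1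
        by discriminate.
      reflexivity.
    + exists (h s * l), w. split; [apply gen_mul; auto; apply Lsub_base; auto|apply gmulA].
  - change (if j then g1 else g0) with (gsel j) in Hg. subst g.
    exists (ginv (gsel j) * l * gsel j), (word6_mul_a w). split; [apply Lsub_conj_g; auto|].
    rewrite <- g_mul_word6, g_inv, <- !gmulA, (gmulA _ (gsel j) (gsel j)), g_sq, gmul1.
    reflexivity.
Qed.

Lemma Hpref_conj_g_swap j y : Hpref [j] y -> Hpref [negb j; j] (ginv (gsel j) * y * gsel j).
Proof.
  apply gen_conj. intros z [u ->]. rewrite g_inv. simpl app. rewrite g_conj_swap_inv.
  apply (Hpref_base [negb j; j]).
Qed.

Lemma Hpref_conj_h_flip j y :
  Hpref [negb j; j] y -> Hpref [negb j; negb j] (ginv (h [negb j]) * y * h [negb j]).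
Proof.
  apply gen_conj. intros z [u ->]. rewrite h_inv by discriminate.
  change ([negb j; j] ++ u) with ([negb j] ++ j :: u). rewrite h_conj_prefix by discriminate.
  apply (Hpref_base [negb j; negb j]).
Qed.

Lemma Hpref_conj_g_fix j y :
  Hpref [negb j; negb j] y -> Hpref [negb j; negb j] (ginv (gsel j) * y * gsel j).
Proof.
  apply gen_conj. intros z [u ->]. rewrite g_inv. simpl app. rewrite g_conj_fix.
  apply (Hpref_base [negb j; negb j]).
Qed.

Lemma conj_Gsub_Hpref1 j x y :
  Gsub j x -> ~ Hsub x -> Hpref [j] y -> Hpref [negb j] (ginv x * y * x).
Proof.
  intros Hx Hn Hy. destruct (Gsub_decomp j x Hx) as [l [w [Hl ->]]].
  assert (Hl' := Lsub_sub_H _ _ Hl).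
  rewrite conjgM. assert (Hy' := Hpref1_normal j l y Hl' Hy).
  set (y' := ginv l * y * l) in *. clearbody y'.
  assert (Hb : Hsub (h [negb j])) by (apply gen_base; exists [negb j]; split; [discriminate|auto]).
  destruct w; simpl word6_val in *.
  - exfalso. apply Hn. rewrite mulg1. auto.
  - apply (Hpref_app [negb j] [j]), Hpref_conj_g_swap; auto.
  - exfalso. apply Hn. apply gen_mul; auto.
  - rewrite conjgM. apply (Hpref_app [negb j] [negb j]), Hpref_conj_h_flip, Hpref_conj_g_swap; auto.
  - rewrite conjgM. apply (Hpref_app [negb j] [j]), Hpref_conj_g_swap, Hpref1_normal; auto.
  - rewrite !conjgM. apply (Hpref_app [negb j] [negb j]).
    apply Hpref_conj_g_fix, Hpref_conj_h_flip, Hpref_conj_g_swap; auto.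
Qed.

Lemma conj_Talt_Hpref1 k : forall b t y, Talt b k t -> Hpref [b] y -> Hsub (ginv t * y * t).
Proof.
  induction k as [|k IH]; intros b t y Ht Hy; simpl in Ht.
  - subst t. rewrite invg1, gmul1, mulg1. apply (Hpref_sub_H [b]); [discriminate|auto].
  - destruct Ht as [x [z [Hx [Hn [Hz ->]]]]]. rewrite conjgM.
    apply (IH (negb b)); auto. apply conj_Gsub_Hpref1; auto.
Qed.

Lemma in_conjH_of g y : Hsub (ginv g * y * g) -> in_conjH Gm h g y.
Proof. intro H. exists (ginv g * y * g). split; auto. symmetry. apply conjgKV. Qed.

Lemma Hpref1_sub_K j y : Hpref [j] y -> K Gm h g0 g1 j y.
Proof.
  intros Hy k g Hg. apply in_conjH_of. destruct k as [|k]; simpl in Hg.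
  - apply gen_conj_in; auto. apply (Hpref_sub_H [j]); [discriminate|auto].
  - apply (conj_Talt_Hpref1 (S k) j); auto.
Qed.

Lemma K_sub_H j y : K Gm h g0 g1 j y -> Hsub y.
Proof.
  intro HK. destruct (HK 0 1 (gen_one _ _)) as [x [Hx E]].
  rewrite invg1, mulg1, gmul1 in E. subst. auto.
Qed.

Lemma Hsub_Gsub j y : Hsub y -> Gsub j y.
Proof. apply gen_mono. intros z Hz. apply gen_base. auto. Qed.

Lemma Talt_absorb c j k z : Hsub c -> Talt j (S k) z -> Talt j (S k) (c * z).
Proof.
  intros Hc [x [z' [Hx [Hn [Hz ->]]]]]. exists (c * x), z'. repeat split; auto.
  - apply gen_mul; auto. apply Hsub_Gsub; auto.
  - intro H. apply Hn. apply (gen_mulIl _ c); auto.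
  - apply gmulA.
Qed.

Lemma Hsub_split j y : Hsub y -> exists a b, Hpref [j] a /\ Hpref [negb j] b /\ y = a * b.
Proof.
  intro Hy. apply gen_involutions_prodg in Hy as [l [F ->]].
  2:{ intros z [s [Hs ->]]. apply h_sq; auto. }
  induction F as [|g l [s [Hs ->]] F IH]; simpl.
  { exists 1, 1. repeat split; [apply gen_one|apply gen_one|]. rewrite gmul1. reflexivity. }
  destruct IH as [a [b [Ha [Hb ->]]]]. destruct s as [|c s]; [congruence|]. destruct (bool_dec c j) as [->|Ec].
  - exists (h (j :: s) * a), b. repeat split; auto; [|apply gmulA].
    apply gen_mul; auto. apply (Hpref_base [j]).
  - replace c with (negb j) by (destruct c, j; simpl in *; congruence).
    exists a, (h (negb j :: s) * b). repeat split; auto; [apply gen_mul; auto; apply (Hpref_base [negb j])|].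
    rewrite !gmulA. f_equal.
    apply gen_involutions_prodg in Ha as [la [Fa ->]].
    2:{ intros z [u ->]. apply h_sq. discriminate. }
    apply commute_prodg. eapply Forall_impl; [|exact Fa]. intros g [u ->].
    apply (h_commute_diverge [] (negb j) j). destruct j; discriminate.
Qed.

Section NormalForm.
Hypothesis g_notin_H : forall j, ~ Hsub (gsel j).

Definition alt_form (g : Gm) : Prop :=
  Hsub g \/ exists j k t a, Talt j (S k) t /\ Hsub a /\ g = t * a.

Lemma alt_form_mul_H c g : Hsub c -> alt_form g -> alt_form (c * g).
Proof.
  intros Hc [Hg|[j [k [t [a [Ht [Ha ->]]]]]]].
  - left. apply gen_mul; auto.
  - right. exists j, k, (c * t), a. repeat split; auto using Talt_absorb. apply gmulA.
Qed.

Lemma alt_form_mul_g b g : alt_form g -> alt_form (gsel b * g).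
Proof.
  assert (Gb : Gsub b (gsel b)) by (apply gen_base; right; destruct b; auto).
  intros [Hg|[j [k [t [a [[x [z [Hx [Hn [Hz ->]]]]] [Ha ->]]]]]]].
  - right. exists b, 0, (gsel b * g), 1. repeat split; [|apply gen_one|symmetry; apply mulg1].
    exists (gsel b * g), 1. repeat split.
    + apply gen_mul; auto. apply Hsub_Gsub; auto.
    + intro Hc. apply (g_notin_H b). rewrite <- (mulg1 (gsel b)), <- (mulgV g), gmulA.
      apply gen_mul; [auto|apply gen_inv; auto].
    + symmetry. apply mulg1.
  - destruct (bool_dec b j) as [<-|Ebj].
    + destruct (classic (Hsub (gsel b * x))) as [Hc|Hc].
      * destruct k as [|k].
        -- simpl in Hz. subst z. left. rewrite mulg1, gmulA. apply gen_mul; auto.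
        -- right. exists (negb b), k, (gsel b * x * z), a.
           repeat split; auto using Talt_absorb. rewrite !gmulA. reflexivity.
      * right. exists b, k, (gsel b * x * z), a. repeat split; auto.
        -- exists (gsel b * x), z. repeat split; auto. apply gen_mul; auto.
        -- rewrite !gmulA. reflexivity.
    + right. exists b, (S k), (gsel b * (x * z)), a. repeat split; auto; [|apply gmulA].
      exists (gsel b), (x * z). repeat split; auto.
      replace (negb b) with j by (destruct b, j; simpl in *; congruence). exists x, z. auto.
Qed.

Lemma alt_form_all g :
  gen Gm (fun y => (exists s, s <> [] /\ y = h s) \/ y = g0 \/ y = g1) g -> alt_form g.
Proof.
  intro Hg. apply gen_involutions_prodg in Hg as [ls [F ->]].
  2:{ intros z [[s [Hs ->]] | [ -> | -> ]]; [apply h_sq; auto|apply (g_sq false)|apply (g_sq true)]. }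
  induction F as [|s ls Hs F IH]; simpl; [left; apply gen_one|].
  destruct Hs as [[u [Hu ->]] | [ -> | -> ]].
  - apply alt_form_mul_H; auto. apply gen_base. eauto.
  - apply (alt_form_mul_g false); auto.
  - apply (alt_form_mul_g true); auto.
Qed.

Lemma kerG_iff_K y :
  (forall g, gen Gm (fun y => (exists s, s <> [] /\ y = h s) \/ y = g0 \/ y = g1) g) ->
  (kerG Gm h y <-> (K Gm h g0 g1 false y /\ K Gm h g0 g1 true y)).
Proof.
  intro Hgen. split.
  - intro H. split; intros k g _; apply H.
  - intros [K0 K1] g. destruct (alt_form_all g (Hgen g)) as [Hg|[j [k [t [a [Ht [Ha ->]]]]]]].
    + apply (K0 0 g Hg).
    + assert (Hc : in_conjH Gm h t y) by (destruct j; [apply (K1 (S k))|apply (K0 (S k))]; auto).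
      destruct Hc as [x [Hx ->]]. exists (ginv a * x * a). split; [apply gen_conj_in; auto|].
      rewrite invgM, <- !gmulA, !mulKVg. reflexivity.
Qed.

End NormalForm.

End Relations.

Fixpoint prefb (v : list bool) (x : stream) : bool :=
  match v with [] => true | b :: v' => Bool.eqb b (x 0) && prefb v' (stl x) end.

Lemma prefb_cons b v x : prefb (b :: v) x = Bool.eqb b (x 0) && prefb v (stl x).
Proof. reflexivity. Qed.

Lemma hact_off v u x : prefb v x = false -> hact (v ++ u) x = x.
Proof.
  revert x; induction v as [|b v IH]; intros x H; [discriminate|].
  rewrite prefb_cons in H. simpl app.
  destruct (bool_dec b (x 0)) as [E|E].
  - rewrite hact_cons_eq, IH by (subst; rewrite ?eqb_reflx in H; auto). apply scons_eta.
  - apply hact_cons_neq; auto.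
Qed.

Lemma prefb_hact v u x : prefb v (hact (v ++ u) x) = prefb v x.
Proof.
  revert x; induction v as [|b v IH]; intro x; [reflexivity|]. simpl app.
  destruct (bool_dec b (x 0)) as [E|E].
  - rewrite hact_cons_eq, !prefb_cons, stl_scons, IH by auto. reflexivity.
  - rewrite hact_cons_neq; auto.
Qed.

Lemma prefb_snoc v b x : prefb (v ++ [b]) x = prefb v x && Bool.eqb b (x (length v)).
Proof.
  revert x; induction v as [|c v IH]; intro x; simpl.
  - rewrite andb_true_r. reflexivity.
  - rewrite IH, andb_assoc. reflexivity.
Qed.

Lemma prefb_snoc_true v b x : prefb (v ++ [b]) x = true -> prefb v x = true /\ x (length v) = b.
Proof.
  rewrite prefb_snoc. intro H. apply andb_prop in H as [H1 H2].
  apply Bool.eqb_prop in H2. auto.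
Qed.

Lemma prefb_snoc_other v b x : x (length v) = b -> prefb (v ++ [negb b]) x = false.
Proof. intros <-. rewrite prefb_snoc. destruct (x (length v)); simpl; apply andb_false_r. Qed.

Lemma hact_flip v x : prefb v x = true -> hact v x (length v) = negb (x (length v)).
Proof.
  revert x; induction v as [|b v IH]; intros x H; [reflexivity|].
  rewrite prefb_cons in H. apply andb_prop in H as [H1 H2]. apply Bool.eqb_prop in H1.
  rewrite hact_cons_eq by auto. apply IH; auto.
Qed.

Lemma prefb_nth l : prefb l (fun k => nth k l false) = true.
Proof. induction l as [|b l IH]; simpl; [reflexivity|]. rewrite eqb_reflx. apply IH. Qed.

Fixpoint stream_take (n : nat) (x : stream) : list bool :=
  match n with 0 => [] | S m => x 0 :: stream_take m (stl x) end.

Lemma stream_take_length n x : length (stream_take n x) = n.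
Proof. revert x; induction n; intros; simpl; auto. Qed.

Lemma prefb_stream_take n x z :
  (forall k, k < n -> z k = x k) -> prefb (stream_take n x) z = true.
Proof.
  revert x z; induction n as [|n IH]; intros x z H; simpl; [reflexivity|].
  rewrite H, eqb_reflx by lia. apply IH. intros k Hk. apply H. lia.
Qed.

Lemma first_difference (x z : stream) :
  x <> z -> exists i, x i <> z i /\ forall k, k < i -> x k = z k.
Proof.
  intro Hxz. assert (exists i, x i <> z i) as [i0 Hi0].
  { apply NNPP. intro N. apply Hxz. apply functional_extensionality. intro i.
    apply NNPP. intro Ni. apply N. eauto. }
  induction i0 as [i0 IH] using lt_wf_ind.
  destruct (classic (exists k, k < i0 /\ x k <> z k)) as [[k [Hk Hd]]|C]; [apply (IH k); auto|].
  exists i0. split; auto. intros k Hk. apply NNPP. intro Nk. apply C. eauto.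
Qed.

Section Separation.
Variables (Gm : Grp) (h : list bool -> Gm) (g0 g1 : Gm).
Hypothesis HR : rels Gm h g0 g1.
Variable f : Gm -> Sym.
Hypothesis fM : forall a b, f (gmul a b) = gmul (f a) (f b).
Hypothesis fH : forall s, s <> [] -> f (h s) = hbij s.
Hypothesis fg0 : f g0 = gbij false.
Hypothesis fg1 : f g1 = gbij true.
Local Notation "a * b" := (@gmul Gm a b).
Local Notation "1" := (@gone Gm).
Local Notation Hsub := (Hsub Gm h).
Local Notation Gsub := (Gsub Gm h g0 g1).
Local Notation Talt := (Talt Gm h g0 g1).
Local Notation gsel := (gsel Gm g0 g1).
Local Notation Hpref := (Hpref Gm h).

Definition act (y : Gm) : stream -> stream := fw (f y).
Definition coact (y : Gm) : stream -> stream := bw (f y).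

Lemma act_mul a b x : act (a * b) x = act a (act b x).
Proof. unfold act. rewrite fM. reflexivity. Qed.

Lemma act_one x : act 1 x = x.
Proof. unfold act. rewrite (morph1 f fM). reflexivity. Qed.

Lemma act_h s x : s <> [] -> act (h s) x = hact s x.
Proof. intro. unfold act. rewrite fH; auto. Qed.

Lemma act_g j x : act (gsel j) x = gact j x.
Proof. unfold act, gsel. destruct j; [rewrite fg1|rewrite fg0]; reflexivity. Qed.

Lemma coact_mul a b x : coact (a * b) x = coact b (coact a x).
Proof. unfold coact. rewrite fM. reflexivity. Qed.

Lemma coact_h s x : s <> [] -> coact (h s) x = hact s x.
Proof. intro. unfold coact. rewrite fH; auto. Qed.

Lemma coact_g j x : coact (gsel j) x = gact j x.
Proof. unfold coact, gsel. destruct j; [rewrite fg1|rewrite fg0]; reflexivity. Qed.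

Lemma act_inv t x : act (ginv t) x = coact t x.
Proof. unfold act, coact. rewrite (morphV f fM). reflexivity. Qed.

Lemma act_coact t x : act t (coact t x) = x.
Proof. apply fw_bw. Qed.

Lemma H_fixes_head y x : Hsub y -> act y x 0 = x 0.
Proof.
  intro Hy. apply gen_involutions_prodg in Hy as [l [F ->]].
  2:{ intros z [s [Hs ->]]. apply (h_sq Gm h g0 g1 HR); auto. }
  revert x. induction F as [|g l [s [Hs ->]] F IH]; intro x; simpl.
  - rewrite act_one. reflexivity.
  - rewrite act_mul, act_h, hact_head; auto.
Qed.

Lemma g_notin_H j : ~ Hsub (gsel j).
Proof.
  intro H. assert (E := H_fixes_head _ (scons (negb j) (scons j (fun _ => false))) H).
  rewrite act_g in E. destruct j; discriminate.
Qed.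

Definition Hdepth (n : nat) (v : list bool) (y : Gm) : Prop :=
  exists l, Forall (fun g => exists u, length u < n /\ g = h (v ++ u)) l /\ y = prodg l.

Lemma Hdepth_one n v : Hdepth n v 1.
Proof. exists []. split; auto. Qed.

Lemma Hdepth_cons n v u y : length u < n -> Hdepth n v y -> Hdepth n v (h (v ++ u) * y).
Proof. intros Hu [l [F ->]]. exists (h (v ++ u) :: l). split; eauto. Qed.

Lemma Hdepth_zero v y : Hdepth 0 v y -> y = 1.
Proof. intros [l [F ->]]. destruct F as [|g l [u [Hu _]] _]; [reflexivity|lia]. Qed.

Lemma Hpref_Hdepth v y : v <> [] -> Hpref v y -> exists n, Hdepth n v y.
Proof.
  intros Hv Hy. apply gen_involutions_prodg in Hy as [l [F ->]].
  2:{ intros z [u ->]. apply (h_sq Gm h g0 g1 HR). destruct v; [congruence|discriminate]. }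
  assert (exists n, Forall (fun g => exists u, length u < n /\ g = h (v ++ u)) l) as [n Fn].
  { induction F as [|g l [u ->] F [n Fn]]; [exists 0; constructor|].
    exists (Nat.max n (S (length u))). constructor; [exists u; split; [lia|reflexivity]|].
    eapply Forall_impl; [|exact Fn]. intros g' [u' [H1 H2]]. exists u'. split; [lia|auto]. }
  exists n, l. auto.
Qed.

Lemma Hdepth_support n v y : v <> [] -> Hdepth n v y ->
  (forall x, prefb v x = false -> act y x = x) /\ (forall x, prefb v (act y x) = prefb v x).
Proof.
  intros Hv [l [F ->]]. induction F as [|g l [u [Hu ->]] F [I1 I2]]; simpl.
  - split; intros; rewrite act_one; auto.
  - assert (Hvu : v ++ u <> []) by (destruct v; [congruence|discriminate]).
    split; intro x; rewrite act_mul, act_h by auto.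
    + intro Hx. rewrite I1 by auto. apply hact_off; auto.
    + rewrite prefb_hact. auto.
Qed.

Lemma Hpref_support v y : v <> [] -> Hpref v y ->
  (forall x, prefb v x = false -> act y x = x) /\ (forall x, prefb v (act y x) = prefb v x).
Proof.
  intros Hv Hy. destruct (Hpref_Hdepth v y Hv Hy) as [n Hn]. apply (Hdepth_support n); auto.
Qed.

Lemma Hdepth_commute n v u y :
  Hdepth n (v ++ [false]) y -> h (v ++ true :: u) * y = y * h (v ++ true :: u).
Proof.
  intros [l [F ->]]. apply commute_prodg. eapply Forall_impl; [|exact F].
  intros g [u' [_ ->]]. rewrite <- app_assoc. apply (h_commute_diverge Gm h g0 g1 HR). discriminate.
Qed.

(* h(v) conjugates H(v0) and H(v1) into each other, and these two commute. *)
Lemma Hdepth_decomp n v y : v <> [] -> Hdepth (S n) v y -> exists (e : bool) y0 y1,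
  y = (if e then h v else 1) * (y0 * y1) /\
  Hdepth n (v ++ [false]) y0 /\ Hdepth n (v ++ [true]) y1.
Proof.
  intros Hv [l [F ->]]. induction F as [|g l [u [Hu ->]] F IH].
  { exists false, 1, 1. simpl. rewrite !gmul1. repeat split; apply Hdepth_one. }
  simpl. destruct IH as [e [y0 [y1 [-> [H0 H1]]]]].
  assert (Hsq : h v * h v = 1) by (apply (h_sq Gm h g0 g1 HR); auto).
  assert (Hswap : forall g r, g * (h v * r) = h v * ((h v * g * h v) * r))
    by (intros; rewrite !gmulA, Hsq, gmul1; reflexivity).
  destruct u as [|b u].
  { rewrite app_nil_r. exists (negb e), y0, y1. split; auto.
    destruct e; simpl; [rewrite gmulA, Hsq|rewrite gmul1]; reflexivity. }
  assert (Hu' : length u < n) by (simpl in Hu; lia).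
  assert (C0 : Hdepth n (v ++ [false]) (h (v ++ false :: u) * y0))
    by (replace (v ++ false :: u) with ((v ++ [false]) ++ u) by (rewrite <- app_assoc; reflexivity);
        apply Hdepth_cons; auto).
  assert (C1 : Hdepth n (v ++ [true]) (h (v ++ true :: u) * y1))
    by (replace (v ++ true :: u) with ((v ++ [true]) ++ u) by (rewrite <- app_assoc; reflexivity);
        apply Hdepth_cons; auto).
  destruct b, e.
  - rewrite Hswap, (h_conj_prefix Gm h g0 g1 HR) by auto.
    exists true, (h (v ++ false :: u) * y0), y1. rewrite <- !gmulA. auto.
  - exists false, y0, (h (v ++ true :: u) * y1). split; auto.
    rewrite !gmul1, gmulA, (Hdepth_commute n v u y0 H0), <- gmulA. reflexivity.
  - rewrite Hswap, (h_conj_prefix Gm h g0 g1 HR) by auto.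
    exists true, y0, (h (v ++ true :: u) * y1). split; auto. f_equal. simpl negb.
    rewrite gmulA, (Hdepth_commute n v u y0 H0), <- gmulA. reflexivity.
  - exists false, (h (v ++ false :: u) * y0), y1. rewrite <- !gmulA, !gmul1. auto.
Qed.

Lemma Hdepth_faithful n : forall v y, v <> [] -> Hdepth n v y ->
  (forall x, prefb v x = true -> act y x = x) -> y = 1.
Proof.
  induction n as [|n IH]; intros v y Hv Hy Hfix; [apply (Hdepth_zero v); auto|].
  destruct (Hdepth_decomp n v y Hv Hy) as [e [y0 [y1 [-> [H0 H1]]]]].
  assert (Nv0 : v ++ [false] <> []) by (destruct v; discriminate).
  assert (Nv1 : v ++ [true] <> []) by (destruct v; discriminate).
  destruct (Hdepth_support n _ _ Nv0 H0) as [_ Pre0].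
  destruct (Hdepth_support n _ _ Nv1 H1) as [Fix1 _].
  assert (Hfix0 : forall x, prefb (v ++ [false]) x = true ->
                            act ((if e then h v else 1) * y0) x = x).
  { intros x Px. destruct (prefb_snoc_true _ _ _ Px) as [Pv Pl].
    rewrite <- (Hfix x Pv) at 2. rewrite !act_mul, (Fix1 x); auto.
    apply (prefb_snoc_other v false); auto. }
  destruct e.
  - exfalso. set (x := fun k => nth k (v ++ [false]) false).
    assert (Px : prefb (v ++ [false]) x = true) by apply prefb_nth.
    assert (E := Hfix0 x Px). rewrite act_mul, act_h in E by auto.
    assert (Px' := Px). rewrite <- Pre0 in Px'.
    destruct (prefb_snoc_true _ _ _ Px) as [_ Pl].
    destruct (prefb_snoc_true _ _ _ Px') as [Pv' Pl'].
    assert (F := hact_flip v _ Pv'). rewrite E, Pl', Pl in F. discriminate.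
  - assert (Ey0 : y0 = 1).
    { apply (IH (v ++ [false])); auto. intros x Px.
      assert (E := Hfix0 x Px). rewrite act_mul, act_one in E. exact E. }
    subst y0. assert (Ey1 : y1 = 1).
    { apply (IH (v ++ [true])); auto. intros x Px.
      destruct (prefb_snoc_true _ _ _ Px) as [Pv _].
      assert (E := Hfix x Pv). rewrite !act_mul, !act_one in E. exact E. }
    subst y1. rewrite !gmul1. reflexivity.
Qed.

Lemma Hpref_faithful v y : v <> [] -> Hpref v y ->
  (forall x, prefb v x = true -> act y x = x) -> y = 1.
Proof.
  intros Hv Hy. destruct (Hpref_Hdepth v y Hv Hy) as [n Hn]. apply (Hdepth_faithful n); auto.
Qed.

Lemma Hpref_meet_trivial y : Hpref [false] y -> Hpref [true] y -> y = 1.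
Proof.
  intros H0 H1. apply (Hpref_faithful [false]); [discriminate|auto|].
  intros x Px. apply (proj1 (Hpref_support [true] y ltac:(discriminate) H1)).
  simpl in *. destruct (x 0); simpl in *; congruence.
Qed.

Lemma coact_one x : coact 1 x = x.
Proof. unfold coact. rewrite (morph1 f fM). reflexivity. Qed.

Lemma act_conj t b x : act (ginv t * b * t) (coact t x) = coact t (act b x).
Proof. rewrite !act_mul, act_coact, act_inv. reflexivity. Qed.

Definition step (j c : bool) : Gm :=
  if Bool.eqb c j then gsel j else h [negb j] * gsel j * h [negb j].

Lemma coact_step j c w : coact (step j c) (scons (negb j) (scons c w)) = scons j w.
Proof.
  unfold step. destruct (Bool.eqb c j) eqn:E.
  - apply Bool.eqb_prop in E as ->. rewrite coact_g. destruct j; reflexivity.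
  - rewrite !coact_mul, !coact_h, coact_g by discriminate.
    destruct j, c; simpl in E; try discriminate; reflexivity.
Qed.

Lemma step_Gsub j c : Gsub j (step j c).
Proof.
  assert (Gg : Gsub j (gsel j)) by (apply gen_base; right; destruct j; auto).
  assert (Gh : Gsub j (h [negb j]))
    by (apply gen_base; left; exists [negb j]; split; [discriminate|auto]).
  unfold step. destruct (Bool.eqb c j); auto. repeat apply gen_mul; auto.
Qed.

Lemma step_notin_H j c : ~ Hsub (step j c).
Proof.
  intro H. assert (E := H_fixes_head _ (scons (negb j) (scons c (fun _ => false))) H).
  unfold step in H, E. destruct (Bool.eqb c j) eqn:Ec.
  - rewrite act_g in E. apply Bool.eqb_prop in Ec as ->. destruct j; discriminate.
  - rewrite !act_mul, !act_h, act_g in E by discriminate.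
    destruct j, c; simpl in Ec; try discriminate; simpl in E; discriminate.
Qed.

Lemma Talt_navigate q : forall j, exists k t, Talt j (S k) t /\
  forall x, prefb (negb j :: q) x = true -> coact t x 0 = x (S (length q)).
Proof.
  induction q as [|c q IH]; intro j.
  - exists 0, (gsel j * 1). split.
    + exists (gsel j), 1. repeat split; auto using g_notin_H.
      apply gen_base; right; destruct j; auto.
    + intros x Px. rewrite coact_mul, coact_g, coact_one.
      simpl in Px. rewrite andb_true_r in Px. apply Bool.eqb_prop in Px.
      rewrite (stream_eta2 x), <- Px. destruct j, (x (S 0)); reflexivity.
  - destruct (IH (negb j)) as [k [t [Ht Hnav]]]. rewrite negb_involutive in Hnav.
    exists (S k), (step j c * t). split.
    + exists (step j c), t. repeat split; auto using step_Gsub, step_notin_H.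
    + intros x Px. rewrite prefb_cons, !prefb_cons in Px.
      apply andb_prop in Px as [P1 P2]. apply Bool.eqb_prop in P1.
      apply andb_prop in P2 as [P2 P3]. apply Bool.eqb_prop in P2.
      rewrite coact_mul, (stream_eta2 x), <- P1. change (x (S 0)) with (stl x 0). rewrite <- P2.
      rewrite coact_step, Hnav; [reflexivity|].
      rewrite prefb_cons, eqb_reflx. exact P3.
Qed.

Lemma K_Hpref_neg_fixes j a b : K Gm h g0 g1 j (a * b) ->
  Hpref [j] a -> Hpref [negb j] b -> forall x, act b x = x.
Proof.
  intros HK Ha Hb x. apply NNPP. intro Cx.
  destruct (first_difference x (act b x)) as [[|m] [Hi Hlt]]; auto.
  { apply Hi. symmetry. apply H_fixes_head, (Hpref_sub_H Gm h [negb j]); auto. discriminate. }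
  assert (X0 : x 0 = negb j).
  { destruct (bool_dec (x 0) (negb j)) as [E|E]; auto. exfalso. apply Cx.
    apply (Hpref_support [negb j]); [discriminate|auto|].
    simpl. destruct (x 0), j; simpl in *; congruence. }
  set (q := stream_take m (stl x)).
  assert (Pq : forall z, (forall k, k < S m -> z k = x k) -> prefb (negb j :: q) z = true).
  { intros z Hz. rewrite prefb_cons, Hz, X0, eqb_reflx by lia. apply prefb_stream_take.
    intros k Hk. apply Hz. lia. }
  destruct (Talt_navigate q j) as [k [t [Ht Hnav]]].
  assert (Lq : length q = m) by apply stream_take_length.
  assert (N1 := Hnav x (Pq x (fun _ _ => eq_refl))).
  assert (N2 := Hnav (act b x) (Pq (act b x) (fun k Hk => eq_sym (Hlt k Hk)))).
  rewrite Lq in N1, N2.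
  destruct (HK (S k) t Ht) as [w [Hw Ew]].
  assert (Hta := conj_Talt_Hpref1 Gm h g0 g1 HR (S k) j t a Ht Ha).
  assert (Htb : Hsub (ginv t * b * t)).
  { apply (gen_mulIl _ (ginv t * a * t)); auto.
    rewrite <- conjg_mul, Ew, conjgK. exact Hw. }
  assert (Hd := H_fixes_head _ (coact t x) Htb).
  rewrite act_conj in Hd. congruence.
Qed.

Lemma K_sub_Hpref1 j y : K Gm h g0 g1 j y -> Hpref [j] y.
Proof.
  intro HK. destruct (Hsub_split Gm h g0 g1 HR j y (K_sub_H Gm h g0 g1 j y HK))
    as [a [b [Ha [Hb ->]]]].
  replace b with (1 : Gm); [rewrite mulg1; exact Ha|].
  symmetry. apply (Hpref_faithful [negb j]); [discriminate|auto|].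
  intros x _. apply (K_Hpref_neg_fixes j a b); auto.
Qed.

End Separation.

Theorem lemma4p3 (Gm : Grp) (h : list bool -> Gm) (g0 g1 : Gm) :
  is_presented Gm h g0 g1 ->
  (forall y, K Gm h g0 g1 false y <-> Hj Gm h false y) /\
  (forall y, K Gm h g0 g1 true y <-> Hj Gm h true y) /\
  (forall y, kerG Gm h y <-> (K Gm h g0 g1 false y /\ K Gm h g0 g1 true y)) /\
  (forall y, (Hj Gm h false y /\ Hj Gm h true y) <-> y = gone) /\
  (forall y, kerG Gm h y <-> y = gone).
Proof.
  intros [HR [Hgen Huniv]].
  destruct (Huniv Sym hbij (gbij false) (gbij true) Sym_rels) as [f [fM [fH [fg0 fg1]]]].
  assert (KH : forall j y, K Gm h g0 g1 j y <-> Hj Gm h j y)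
    by (split; [eapply K_sub_Hpref1|apply Hpref1_sub_K]; eauto).
  assert (KER : forall y, kerG Gm h y <-> (K Gm h g0 g1 false y /\ K Gm h g0 g1 true y))
    by (intro; eapply kerG_iff_K; eauto using g_notin_H).
  assert (MEET : forall y, (Hj Gm h false y /\ Hj Gm h true y) <-> y = gone).
  { split; [intros [H0 H1]; eapply Hpref_meet_trivial; eauto|intros ->; split; apply gen_one]. }
  split; [exact (KH false)|split; [exact (KH true)|split; [exact KER|split; [exact MEET|]]]].
  intro y. rewrite KER, !KH. apply MEET.
Qed.
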